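(* Let $(X,d)$ be a complete metric space, $N\in\mathbb{N}\setminus\{0\}$, $\mathcal{R}$ an $N$--transitive binary relation on $X$, and $T:X\rightarrow X$ an $\mathcal{R}$--contractive mapping of Meir--Keeler type. Assume: (D1) $T$ is $\mathcal{R}$--preserving; (D2) there exists $x_{0}\in X$ with $x_{0}\mathcal{R}Tx_{0}$. If either (D3) $T$ is continuous, or (D4) $(X,d)$ is $(T,\mathcal{R})$--regular, then $T$ has a fixed point $x^{\ast}\in X$. If additionally (D5) $X$ is $\mathcal{R}$--connected, then $x^{\ast}$ is the unique fixed point of $T$ and $T^{n}x\rightarrow x^{\ast}$ as $n\rightarrow\infty$ for every $x\in X$.
   Context: $\mathbb{N}$ is the set of non-negative integers; $T^n$ is the $n$-th iterate. $T$ is $\mathcal{R}$--contractive of Meir--Keeler type if for every $\varepsilon>0$ there exists $\delta(\varepsilon)>0$ such that for all $x,y\in X$ with $x\mathcal{R}y$ and $\varepsilon\leq d(x,y)<\varepsilon+\delta(\varepsilon)$ one has $d(Tx,Ty)<\varepsilon$. $T$ is $\mathcal{R}$--preserving if $x\mathcal{R}y$ implies $Tx\mathcal{R}Ty$. $\mathcal{R}$ is $N$--transitive if for all $x_0,\dots,x_{N+1}\in X$ with $x_i\mathcal{R}x_{i+1}$ for all $i\in\{0,\dots,N\}$ one has $x_0\mathcal{R}x_{N+1}$. A sequence $\{x_n\}$ is $(T,\mathcal{R})$--orbital if $x_n=T^nx_0$ and $x_n\mathcal{R}x_{n+1}$ for all $n$. $(X,d)$ is $(T,\mathcal{R})$--regular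 if for every $(T,\mathcal{R})$--orbital sequence $\{x_n\}$ with $x_n\rightarrow x\in X$ there is a subsequence $\{x_{n(k)}\}$ with $x_{n(k)}\mathcal{R}x$ for all $k$. An $\mathcal{R}$--chain from $x$ to $y$ is $(z_0,\dots,z_n)$ with $z_0=x$, $z_n=y$ and $z_{i-1}\mathcal{R}z_i$ or $z_i\mathcal{R}z_{i-1}$ for each $i\in\{1,\dots,n\}$; $X$ is $\mathcal{R}$--connected if for all $x\neq y$ there is an $\mathcal{R}$--chain from $x$ to $y$. *)

From Stdlib Require Import Reals.
Open Scope R_scope.

Definition is_metric {X : Type} (d : X -> X -> R) : Prop :=
  (forall x y, 0 <= d x y) /\
  (forall x y, d x y = 0 <-> x = y) /\
  (forall x y, d x y = d y x) /\
  (forall x y z, d x z <= d x y + d y z).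

Definition seq_conv {X : Type} (d : X -> X -> R) (u : nat -> X) (l : X) : Prop :=
  forall eps, 0 < eps -> exists N0 : nat, forall n, (N0 <= n)%nat -> d (u n) l < eps.

Definition cauchy_seq {X : Type} (d : X -> X -> R) (u : nat -> X) : Prop :=
  forall eps, 0 < eps -> exists N0 : nat,
    forall m n, (N0 <= m)%nat -> (N0 <= n)%nat -> d (u m) (u n) < eps.

Definition complete_metric {X : Type} (d : X -> X -> R) : Prop :=
  forall u : nat -> X, cauchy_seq d u -> exists l, seq_conv d u l.

Definition metric_continuous {X : Type} (d : X -> X -> R) (T : X -> X) : Prop :=
  forall x eps, 0 < eps -> exists delta, 0 < delta /\
    forall y, d x y < delta -> d (T x) (T y) < eps.

Definition MK_contractive {X : Type} (d : X -> X -> R) (Rl : X -> X -> Prop)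
  (T : X -> X) : Prop :=
  forall eps, 0 < eps -> exists delta, 0 < delta /\
    forall x y, Rl x y -> eps <= d x y -> d x y < eps + delta -> d (T x) (T y) < eps.

Definition R_preserving {X : Type} (Rl : X -> X -> Prop) (T : X -> X) : Prop :=
  forall x y, Rl x y -> Rl (T x) (T y).

Definition N_transitive {X : Type} (N : nat) (Rl : X -> X -> Prop) : Prop :=
  forall z : nat -> X, (forall i, (i <= N)%nat -> Rl (z i) (z (S i))) -> Rl (z 0%nat) (z (S N)).

Definition iterT {X : Type} (T : X -> X) (n : nat) (x : X) : X := Nat.iter n T x.

Definition TR_orbital {X : Type} (Rl : X -> X -> Prop) (T : X -> X) (u : nat -> X) : Prop :=
  forall n, u n = iterT T n (u 0%nat) /\ Rl (u n) (u (S n)).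

Definition TR_regular {X : Type} (d : X -> X -> R) (Rl : X -> X -> Prop) (T : X -> X) : Prop :=
  forall (u : nat -> X) (x : X), TR_orbital Rl T u -> seq_conv d u x ->
    exists phi : nat -> nat, (forall k, (phi k < phi (S k))%nat) /\
      forall k, Rl (u (phi k)) x.

Definition R_chain {X : Type} (Rl : X -> X -> Prop) (x y : X) (n : nat) (z : nat -> X) : Prop :=
  z 0%nat = x /\ z n = y /\
  forall i, (1 <= i <= n)%nat -> Rl (z (i - 1)%nat) (z i) \/ Rl (z i) (z (i - 1)%nat).

Definition R_connected {X : Type} (Rl : X -> X -> Prop) : Prop :=
  forall x y : X, x <> y -> exists (n : nat) (z : nat -> X), R_chain Rl x y n z.

(** Orbits of R-related points are asymptotic: [d (T^k a) (T^k b)] decreases, and a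
    positive limit [r] is impossible because the Meir-Keeler condition at [r] would push
    the sequence below [r].  Along the orbit of [x0], N-transitivity relates [x n] to
    every [x (n + 1 + j N)]; with consecutive steps eventually tiny, the Meir-Keeler
    condition keeps these jumps below [eps + delta/2] by induction on [j], which makes
    the orbit Cauchy.  Its limit is fixed, by continuity or by regularity (T being
    nonexpansive on related pairs).  If X is R-connected, chaining asymptotic orbits
    along an R-chain shows that every orbit converges to that fixed point. *)

From Stdlib Require Import Reals Lra Lia Classical.
Open Scope R_scope.

Lemma iterT_add {X : Type} (T : X -> X) (p q : nat) (x : X) :
  iterT T (p + q) x = iterT T p (iterT T q x).
Proof. apply Nat.iter_add. Qed.

Lemma iterT_succ_r {X : Type} (T : X -> X) (n : nat) (x : X) :
  iterT T (S n) x = iterT T n (T x).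
Proof. apply Nat.iter_succ_r. Qed.

Lemma iterT_fixed {X : Type} (T : X -> X) (x : X) (n : nat) :
  T x = x -> iterT T n x = x.
Proof. intros Hx; induction n as [|n IH]; [reflexivity|]. simpl. rewrite IH; exact Hx. Qed.

Lemma N_transitive_chain {X : Type} (N : nat) (Rl : X -> X -> Prop) (u : nat -> X) :
  N_transitive N Rl -> (forall n, Rl (u n) (u (S n))) ->
  forall n j, Rl (u n) (u (n + 1 + j * N)%nat).
Proof.
  intros Htr Hu n j; induction j as [|j IH].
  - replace (n + 1 + 0 * N)%nat with (S n) by lia. apply Hu.
  - set (z := fun i => match i with 0%nat => u n | S i => u (n + 1 + j * N + i)%nat end).
    replace (n + 1 + S j * N)%nat with (n + 1 + j * N + N)%nat by lia.
    apply (Htr z). intros [|i] _; simpl.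
    + rewrite Nat.add_0_r. exact IH.
    + replace (n + 1 + j * N + S i)%nat with (S (n + 1 + j * N + i)) by lia. apply Hu.
Qed.

Section Metric.

Variables (X : Type) (d : X -> X -> R).
Hypothesis Hm : is_metric d.

Lemma dist_ge0 x y : 0 <= d x y.
Proof. apply Hm. Qed.

Lemma dist_refl x : d x x = 0.
Proof. apply Hm; reflexivity. Qed.

Lemma dist_sym x y : d x y = d y x.
Proof. apply Hm. Qed.

Lemma dist_triangle x y z : d x z <= d x y + d y z.
Proof. apply Hm. Qed.

Lemma eq_of_dist_small a b : (forall eps, 0 < eps -> d a b < eps) -> a = b.
Proof.
  intros Hsmall. apply Hm.
  destruct (Rle_lt_or_eq_dec 0 (d a b) (dist_ge0 a b)) as [Hpos|Hz]; [|auto].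
  specialize (Hsmall _ Hpos). lra.
Qed.

Lemma seq_conv_unique u l l' : seq_conv d u l -> seq_conv d u l' -> l = l'.
Proof.
  intros Hl Hl'. apply eq_of_dist_small. intros eps Heps.
  destruct (Hl (eps / 2)) as [K HK]; [lra|]. destruct (Hl' (eps / 2)) as [K' HK'];[lra|].
  specialize (HK (K + K')%nat ltac:(lia)). specialize (HK' (K + K')%nat ltac:(lia)).
  pose proof (dist_triangle l (u (K + K')%nat) l') as Htri.
  rewrite (dist_sym l (u (K + K')%nat)) in Htri. lra.
Qed.

Lemma seq_conv_iterT_fixed (T : X -> X) x : T x = x -> seq_conv d (fun n => iterT T n x) x.
Proof.
  intros Hx eps Heps; exists 0%nat; intros n _.
  rewrite iterT_fixed, dist_refl; assumption.
Qed.

Lemma seq_conv_shift u l : seq_conv d u l -> seq_conv d (fun n => u (S n)) l.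
Proof. intros Hl eps Heps. destruct (Hl eps Heps) as [K HK]. exists K; intros; apply HK; lia. Qed.

Lemma seq_conv_subseq u l (phi : nat -> nat) :
  (forall k, (phi k < phi (S k))%nat) -> seq_conv d u l -> seq_conv d (fun k => u (phi k)) l.
Proof.
  intros Hphi Hl eps Heps. destruct (Hl eps Heps) as [K HK]. exists K; intros k Hk.
  apply HK. enough (Hid : forall k, (k <= phi k)%nat) by (specialize (Hid k); lia).
  intros i; induction i as [|i IH]; [lia|]. specialize (Hphi i); lia.
Qed.

Lemma seq_conv_continuous (T : X -> X) u l :
  metric_continuous d T -> seq_conv d u l -> seq_conv d (fun n => T (u n)) (T l).
Proof.
  intros Hc Hl eps Heps. destruct (Hc l eps Heps) as [delta [Hdelta HT]].
  destruct (Hl delta Hdelta) as [K HK]. exists K; intros n Hn.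
  rewrite dist_sym. apply HT. rewrite dist_sym. auto.
Qed.

Lemma dist_le_steps (u : nat -> X) (n0 : nat) (eta : R) :
  (forall k, (n0 <= k)%nat -> d (u k) (u (S k)) <= eta) ->
  forall n p, (n0 <= n)%nat -> d (u n) (u (n + p)%nat) <= INR p * eta.
Proof.
  intros Hstep n p Hn; induction p as [|p IH].
  - rewrite Nat.add_0_r, dist_refl. simpl. lra.
  - rewrite Nat.add_succ_r, S_INR.
    pose proof (Hstep (n + p)%nat ltac:(lia)).
    pose proof (dist_triangle (u n) (u (n + p)%nat) (u (S (n + p)))). lra.
Qed.

Section MeirKeeler.

Variables (Rl : X -> X -> Prop) (T : X -> X).
Hypotheses (HMK : MK_contractive d Rl T) (Hpres : R_preserving Rl T).

Lemma MK_nonexpansive x y : Rl x y -> d (T x) (T y) <= d x y.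
Proof.
  intros Hxy. destruct (Rle_lt_or_eq_dec 0 (d x y) (dist_ge0 x y)) as [Hpos|Hz].
  - destruct (HMK _ Hpos) as [delta [Hdelta HT]]. left. apply HT; [exact Hxy|lra|lra].
  - symmetry in Hz. apply Hm in Hz. subst y. rewrite !dist_refl. lra.
Qed.

Lemma iterT_preserving k a b : Rl a b -> Rl (iterT T k a) (iterT T k b).
Proof. intros Hab; induction k as [|k IH]; simpl; auto. Qed.

Lemma iterT_nonexpansive k a b : Rl a b -> d (iterT T k a) (iterT T k b) <= d a b.
Proof.
  intros Hab; induction k as [|k IH]; simpl; [lra|].
  pose proof (MK_nonexpansive _ _ (iterT_preserving k a b Hab)). lra.
Qed.

Lemma seq_conv_related u l :
  (forall n, Rl (u n) l) -> seq_conv d u l -> seq_conv d (fun n => T (u n)) (T l).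
Proof.
  intros Hrel Hl eps Heps. destruct (Hl eps Heps) as [K HK]. exists K; intros n Hn.
  pose proof (MK_nonexpansive _ _ (Hrel n)). specialize (HK n Hn). lra.
Qed.

Definition asymptotic (a b : X) : Prop :=
  forall eps, 0 < eps -> exists K : nat, forall k, (K <= k)%nat ->
    d (iterT T k a) (iterT T k b) < eps.

Lemma asymptotic_refl a : asymptotic a a.
Proof. intros eps Heps; exists 0%nat; intros; rewrite dist_refl; exact Heps. Qed.

Lemma asymptotic_sym a b : asymptotic a b -> asymptotic b a.
Proof.
  intros Hab eps Heps. destruct (Hab eps Heps) as [K HK].
  exists K; intros; rewrite dist_sym; auto.
Qed.

Lemma asymptotic_trans a b c : asymptotic a b -> asymptotic b c -> asymptotic a c.
Proof.
  intros Hab Hbc eps Heps.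
  destruct (Hab (eps / 2)) as [K1 HK1]; [lra|]. destruct (Hbc (eps / 2)) as [K2 HK2]; [lra|].
  exists (K1 + K2)%nat; intros k Hk.
  specialize (HK1 k ltac:(lia)). specialize (HK2 k ltac:(lia)).
  pose proof (dist_triangle (iterT T k a) (iterT T k b) (iterT T k c)). lra.
Qed.

Lemma asymptotic_of_rel a b : Rl a b -> asymptotic a b.
Proof.
  intros Hab.
  set (s := fun k => d (iterT T k a) (iterT T k b)).
  assert (Hdec : Un_decreasing s).
  { intros n. apply MK_nonexpansive, iterT_preserving, Hab. }
  assert (Hlb : has_lb s).
  { exists 0. intros y [i ->]. unfold opp_seq, s.
    pose proof (dist_ge0 (iterT T i a) (iterT T i b)). lra. }
  destruct (decreasing_cv s Hdec Hlb) as [r Hr].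
  pose proof (decreasing_ineq s r Hdec Hr) as Hge.
  assert (Hr0 : r = 0).
  { destruct (Rle_or_lt r 0) as [Hle|Hpos].
    - destruct Hle as [Hneg|]; [|assumption].
      destruct (Hr (- r)) as [K HK]; [lra|]. specialize (HK K (le_n _)).
      apply Rabs_def2 in HK. pose proof (dist_ge0 (iterT T K a) (iterT T K b)).
      unfold s in HK. lra.
    -       destruct (HMK r Hpos) as [delta [Hdelta HT]].
      destruct (Hr delta Hdelta) as [K HK]. specialize (HK K (le_n _)).
      unfold R_dist in HK. apply Rabs_def2 in HK. pose proof (Hge (S K)) as HgeS.
      unfold s in HK, HgeS.
      change (iterT T (S K) ?x) with (T (iterT T K x)) in HgeS.
      assert (d (T (iterT T K a)) (T (iterT T K b)) < r) by
        (apply HT; [apply iterT_preserving, Hab|apply Hge|lra]).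
      lra. }
  subst r. intros eps Heps. destruct (Hr eps Heps) as [K HK]. exists K; intros k Hk.
  specialize (HK k Hk). apply Rabs_def2 in HK. unfold s in HK. lra.
Qed.

Lemma asymptotic_of_chain x y n z : R_chain Rl x y n z -> asymptotic x y.
Proof.
  intros [Hz0 [Hzn Hlink]]. rewrite <- Hzn, <- Hz0.
  enough (forall i, (i <= n)%nat -> asymptotic (z 0%nat) (z i)) by auto.
  intros i; induction i as [|i IH]; intros Hi; [apply asymptotic_refl|].
  apply asymptotic_trans with (z i); [apply IH; lia|].
  destruct (Hlink (S i) ltac:(lia)) as [Hr|Hr]; rewrite Nat.sub_succ, Nat.sub_0_r in Hr.
  - apply asymptotic_of_rel, Hr.
  - apply asymptotic_sym, asymptotic_of_rel, Hr.
Qed.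

Section Orbit.

Variables (N : nat) (x0 : X).
Hypotheses (HN : (0 < N)%nat) (Htr : N_transitive N Rl) (Hx0 : Rl x0 (T x0)).

Lemma orbit_rel n : Rl (iterT T n x0) (iterT T (S n) x0).
Proof. rewrite iterT_succ_r. apply iterT_preserving, Hx0. Qed.

Lemma orbit_jump_bound (eps delta : R) (n0 : nat) :
  0 < eps ->
  (forall x y, Rl x y -> eps <= d x y -> d x y < eps + delta -> d (T x) (T y) < eps) ->
  (forall n p, (n0 <= n)%nat -> (p <= N)%nat ->
     d (iterT T n x0) (iterT T (n + p) x0) <= delta / 2) ->
  forall n j, (n0 <= n)%nat ->
    d (iterT T n x0) (iterT T (n + 1 + j * N) x0) < eps + delta / 2.
Proof.
  intros Heps HT Hshort n j Hn; induction j as [|j IH].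
  - rewrite Nat.mul_0_l, Nat.add_0_r. pose proof (Hshort n 1%nat Hn ltac:(lia)). lra.
  - set (m := (n + 1 + j * N)%nat) in IH.
    pose proof (N_transitive_chain N Rl _ Htr orbit_rel n j) as Hnm. fold m in Hnm.
    assert (Hstep : d (iterT T (S n) x0) (iterT T (S m) x0) < eps).
    { simpl. destruct (Rle_or_lt eps (d (iterT T n x0) (iterT T m x0))).
      - apply HT; [exact Hnm|assumption|lra].
      - pose proof (MK_nonexpansive _ _ Hnm). lra. }
    pose proof (iterT_nonexpansive (N - 1) _ _ (Hpres _ _ Hnm)) as Hshift.
    change (T (iterT T ?k x0)) with (iterT T (S k) x0) in Hshift.
    rewrite <- !iterT_add in Hshift.
    replace (N - 1 + S n)%nat with (n + N)%nat in Hshift by lia.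
    replace (N - 1 + S m)%nat with (n + 1 + S j * N)%nat in Hshift by (unfold m; lia).
    pose proof (Hshort n N Hn (le_n N)).
    pose proof (dist_triangle (iterT T n x0) (iterT T (n + N) x0)
                  (iterT T (n + 1 + S j * N) x0)).
    lra.
Qed.

Lemma orbit_short_jumps delta : 0 < delta -> exists n0 : nat,
  forall n p, (n0 <= n)%nat -> (p <= N)%nat ->
    d (iterT T n x0) (iterT T (n + p) x0) <= delta / 2.
Proof.
  intros Hdelta.
  assert (HNpos : 0 < INR N) by (apply lt_0_INR; exact HN).
  set (eta := delta / (2 * INR N)).
  assert (Heta : 0 < eta) by (unfold eta; apply Rdiv_lt_0_compat; lra).
  destruct (asymptotic_of_rel _ _ Hx0 eta Heta) as [n0 Hn0].
  exists n0; intros n p Hn Hp.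
  assert (Hsteps : forall k, (n0 <= k)%nat -> d (iterT T k x0) (iterT T (S k) x0) <= eta).
  { intros k Hk. rewrite iterT_succ_r. left. apply Hn0, Hk. }
  pose proof (dist_le_steps (fun k => iterT T k x0) n0 eta Hsteps n p Hn).
  apply le_INR in Hp.
  assert (INR p * eta <= INR N * eta) by (apply Rmult_le_compat_r; lra).
  replace (INR N * eta) with (delta / 2) in * by (unfold eta; field; lra).
  lra.
Qed.

Lemma orbit_cauchy : cauchy_seq d (fun n => iterT T n x0).
Proof.
  intros eps' Heps'. set (eps := eps' / 2).
  destruct (HMK eps ltac:(unfold eps; lra)) as [dm [Hdm HT]].
  pose proof (Rmin_l dm eps) as Hdelta_dm. pose proof (Rmin_r dm eps) as Hdelta_eps.
  set (delta := Rmin dm eps) in *.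
  assert (Hdelta : 0 < delta) by (apply Rmin_pos; unfold eps; lra).
  assert (HTdelta : forall x y, Rl x y -> eps <= d x y -> d x y < eps + delta ->
                      d (T x) (T y) < eps).
  { intros x y Hxy H1 H2. apply HT; [assumption|assumption|lra]. }
  destruct (orbit_short_jumps delta Hdelta) as [n0 Hshort].
  assert (Hforward : forall n m, (n0 <= n)%nat -> (n <= m)%nat ->
                       d (iterT T n x0) (iterT T m x0) < eps').
  { intros n m Hn Hnm. destruct (Nat.eq_dec n m) as [<-|Hneq].
    { rewrite dist_refl. exact Heps'. }
    (* write m = n + 1 + j N + r with r < N *)
    set (q := (m - n - 1)%nat).
    assert (Hqm : m = (n + 1 + q)%nat) by (unfold q; lia).
    pose proof (Nat.div_mod q N ltac:(lia)) as Hq. rewrite Nat.mul_comm in Hq.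
    pose proof (Nat.mod_upper_bound q N ltac:(lia)) as Hr.
    pose proof (orbit_jump_bound eps delta n0 ltac:(unfold eps; lra) HTdelta Hshort
                  n (q / N) Hn) as Hjump.
    pose proof (Hshort (n + 1 + q / N * N)%nat (q mod N) ltac:(lia) ltac:(lia)) as Hrest.
    replace (n + 1 + q / N * N + q mod N)%nat with m in Hrest by lia.
    pose proof (dist_triangle (iterT T n x0) (iterT T (n + 1 + q / N * N) x0) (iterT T m x0)).
    unfold eps in *. lra. }
  exists n0. intros m n Hm' Hn'. destruct (Nat.le_ge_cases n m).
  - rewrite dist_sym. apply Hforward; assumption.
  - apply Hforward; assumption.
Qed.

End Orbit.

Lemma orbit_limit_fixed x0 l :
  Rl x0 (T x0) -> metric_continuous d T \/ TR_regular d Rl T ->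
  seq_conv d (fun n => iterT T n x0) l -> T l = l.
Proof.
  intros Hx0 Hcase Hl.
  pose proof (seq_conv_shift _ _ Hl) as Hshift.
  destruct Hcase as [Hcont|Hreg].
  - apply (seq_conv_unique (fun n => iterT T (S n) x0)); [|exact Hshift].
    exact (seq_conv_continuous T _ _ Hcont Hl).
  - assert (Horb : TR_orbital Rl T (fun n => iterT T n x0)).
    { intros n; split; [reflexivity|apply orbit_rel, Hx0]. }
    destruct (Hreg _ l Horb Hl) as [phi [Hphi Hrel]].
    apply (seq_conv_unique (fun k => iterT T (S (phi k)) x0)).
    + exact (seq_conv_related _ _ Hrel (seq_conv_subseq _ _ _ Hphi Hl)).
    + exact (seq_conv_subseq (fun n => iterT T (S n) x0) _ _ Hphi Hshift).
Qed.

Lemma orbit_conv_of_connected xs :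
  R_connected Rl -> T xs = xs -> forall x, seq_conv d (fun n => iterT T n x) xs.
Proof.
  intros Hconn Hxs x. destruct (classic (x = xs)) as [->|Hneq].
  - apply seq_conv_iterT_fixed, Hxs.
  - intros eps Heps. destruct (Hconn x xs Hneq) as [n [z Hchain]].
    destruct (asymptotic_of_chain _ _ _ _ Hchain eps Heps) as [K HK].
    exists K; intros k Hk. specialize (HK k Hk). rewrite (iterT_fixed T xs k Hxs) in HK. exact HK.
Qed.

End MeirKeeler.

End Metric.

Theorem corollary5 (X : Type) (d : X -> X -> R) (N : nat) (Rl : X -> X -> Prop) (T : X -> X) :
  is_metric d -> complete_metric d ->
  (0 < N)%nat -> N_transitive N Rl ->
  MK_contractive d Rl T ->
  R_preserving Rl T ->
  (exists x0 : X, Rl x0 (T x0)) ->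
  (metric_continuous d T \/ TR_regular d Rl T) ->
  exists xs : X, T xs = xs /\
    (R_connected Rl ->
       (forall y : X, T y = y -> y = xs) /\
       (forall x : X, seq_conv d (fun n => iterT T n x) xs)).
Proof.
  intros Hm Hcomp HN Htr HMK Hpres [x0 Hx0] Hcase.
  destruct (Hcomp _ (orbit_cauchy X d Hm Rl T HMK Hpres N x0 HN Htr Hx0)) as [xs Hxs].
  pose proof (orbit_limit_fixed X d Hm Rl T HMK Hpres x0 xs Hx0 Hcase Hxs) as Hfix.
  exists xs; split; [exact Hfix|]. intros Hconn.
  pose proof (orbit_conv_of_connected X d Hm Rl T HMK Hpres xs Hconn Hfix) as Hconv.
  split; [|exact Hconv].
  intros y Hy. apply (seq_conv_unique X d Hm (fun n => iterT T n y)); [|exact (Hconv y)].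
  apply (seq_conv_iterT_fixed X d Hm), Hy.
Qed.
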